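(* Let $d=m=1$, $n=0$ (state space $\mathbb R_+$), let $\mu=\sum_{n=1}^\infty n^{-2}\delta_n$ (with $\delta_n$ the Dirac measure at $n$), and $\beta_1=\int_0^\infty h(\xi)\,\mu(d\xi)=\sum_{n\ge1}n^{-2}$. Then the parameters $\alpha=(0,0)$, $\beta=(0,\beta_1)$, $\gamma=(0,0)$, $\kappa=(0,\mu)$ are admissible, the associated stochastically continuous affine process satisfies $\int_0^\infty(|\xi|\wedge|\xi|^2)\,\mu(d\xi)=\infty$, and yet it is conservative. In fact $R_0\equiv0$, $R_1(u)=\sum_{n\ge1}(e^{un}-1)/n^2$ for $u\le0$, and $\int_{-1}^{0-}\frac{du}{R_1(u)}=-\infty$.
   Context: For $d=1$, $m=1$: truncation function $h(\xi)=(1\wedge|\xi|)\xi/|\xi|$ for $\xi\ne0$. Admissible parameters $(\alpha,\beta,\gamma,\kappa)$ here consist of $\alpha_0,\alpha_1\ge0$, $\beta_0,\beta_1\in\mathbb R$ with $\beta_0-\int h\,d\kappa_0\ge0$ (and $\int |h|\,d\kappa_0<\infty$), $\gamma_0,\gamma_1\ge0$, and Borel measures $\kappa_0,\kappa_1$ on $(0,\infty)$ with $\int |h|^2 d\kappa_j<\infty$; $R_i(u)=\frac12\alpha_iu^2+\beta_iu-\gamma_i+\int(e^{u\xi}-1-uh(\xi))\kappa_i(d\xi)$. Each admissible parameter set determines a unique stochastically continuous affine Markov process $(X,\mathbb P_x)_{x\in\mathbb R_+}$ (possibly killed, with values in $\mathbb R_+\cup\{\Delta\}$) whose transition function satisfies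 $\int e^{u\xi}p_t(x,d\xi)=\exp(\psi_0(t,u)+\psi(t,u)x)$ with $\partial_t\psi=R_1(\psi)$, $\psi(0,u)=u$, $\partial_t\psi_0=R_0(\psi)$, $\psi_0(0,u)=0$. The process is conservative if $p_t(x,\mathbb R_+)=1$ for all $t,x$. *)

From Stdlib Require Import Reals.
Open Scope R_scope.

(* Truncation function h(xi) = (1 /\ |xi|) xi/|xi| (d = 1); h 0 = 0 by the
   Stdlib convention x / 0 = 0 * ... (irrelevant: measures live on (0,oo)). *)
Definition h (xi : R) : R := Rmin 1 (Rabs xi) * xi / Rabs xi.

(* The measure mu = sum_{n>=1} n^{-2} delta_n.  Integrals against mu are
   series: int f dmu = sum_{k>=0} f(k+1) / (k+1)^2.  mu_terms f is the
   sequence of terms of this series. *)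
Definition mu_terms (f : R -> R) (k : nat) : R :=
  f (INR (S k)) / (INR (S k)) ^ 2.

Definition mu_integral (f : R -> R) (l : R) : Prop :=
  infinite_sum (mu_terms f) l.

(* int f dmu = +oo for a nonnegative integrand: partial sums diverge to +oo *)
Definition mu_integral_infinite (f : R -> R) : Prop :=
  cv_infty (fun N => sum_f_R0 (mu_terms f) N).

(* Parameters of the example: alpha = (0,0), beta = (0, beta1),
   gamma = (0,0), kappa = (0, mu). *)
Definition alpha0 : R := 0.
Definition alpha1 : R := 0.
Definition beta0 : R := 0.
Definition gamma0 : R := 0.
Definition gamma1 : R := 0.

(* R_0(u) = 1/2 alpha0 u^2 + beta0 u - gamma0 + int (...) dkappa0,
   with kappa0 = 0 so the integral term is 0. *)
Definition Rfun0 (u : R) : R := / 2 * alpha0 * u ^ 2 + beta0 * u - gamma0 + 0.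

(* R1 is the function R_1(u) = 1/2 alpha1 u^2 + beta1 u - gamma1
   + int (e^{u xi} - 1 - u h(xi)) mu(dxi), on u <= 0 (where it is finite). *)
Definition is_R1 (beta1 : R) (R1 : R -> R) : Prop :=
  forall u : R, u <= 0 ->
    mu_integral (fun xi => exp (u * xi) - 1 - u * h xi)
                (R1 u - (/ 2 * alpha1 * u ^ 2 + beta1 * u - gamma1)).

Definition improper_integral_left_neg_infty (f : R -> R) (a b : R) : Prop :=
  (forall e : R, 0 < e < b - a -> inhabited (Riemann_integrable f a (b - e))) /\
  (forall M : R, exists delta : R, 0 < delta /\
     forall e : R, 0 < e < delta -> e < b - a ->
       forall pr : Riemann_integrable f a (b - e), RiemannInt pr < - M).

(* psi0, psi solve the generalized Riccati equations of the affine process: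
   d/dt psi(t,u) = R1(psi(t,u)), psi(0,u) = u, d/dt psi0(t,u) = R0(psi(t,u)),
   psi0(0,u) = 0, for t >= 0 and u <= 0 (right-continuity at t = 0,
   differentiability for t > 0), with psi(t,u) <= 0 (the domain of R1). *)
Definition riccati_solution (R1 : R -> R) (psi0 psi : R -> R -> R) : Prop :=
  forall u : R, u <= 0 ->
    psi 0 u = u /\ psi0 0 u = 0 /\
    (forall t, 0 <= t -> psi t u <= 0) /\
    (forall t, 0 < t -> derivable_pt_lim (fun s => psi s u) t (R1 (psi t u))) /\
    (forall t, 0 < t -> derivable_pt_lim (fun s => psi0 s u) t (Rfun0 (psi t u))) /\
    (forall eps, 0 < eps -> exists delta, 0 < delta /\ forall s, 0 <= s < delta ->
        Rabs (psi s u - u) < eps /\ Rabs (psi0 s u) < eps).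

(* Total mass p_t(x, R_+) = int e^{0 xi} p_t(x, dxi) = exp(psi0(t,0) + psi(t,0) x). *)
Definition total_mass (psi0 psi : R -> R -> R) (t x : R) : R :=
  exp (psi0 t 0 + psi t 0 * x).

(* Cutting the series [R1 (-v) = sum_n (exp (-v n) - 1) / n^2] at [n ~ 1/v], the head is at
   most [v] times a harmonic sum and the tail telescopes, so [- R1 (- v) <= v (3 - ln v)] on
   [(0, 1]].  This Osgood modulus has the primitive [- ln (3 - ln (- u))] of [- 1 / osgood (- u)],
   which tends to [-oo] at [0-]; hence [int du / R1 u] diverges at [0-].  By the same token the
   potential [t - osgood_primitive (psi t)] is nondecreasing along a solution of
   [psi' = R1 (psi)], [psi 0 = 0], and blows up if [psi] ever leaves [0]: so [psi (., 0) = 0].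
   As [R0 = 0], also [psi0 (., 0) = 0], and the total mass [exp (psi0 + psi x)] is [1]. *)

From Stdlib Require Import Reals Lra Lia.
From Coquelicot Require Import Coquelicot.
Open Scope R_scope.

Lemma INR_S_pos (k : nat) : 0 < INR (S k).
Proof. apply lt_0_INR; lia. Qed.

Lemma INR_S_ge1 (k : nat) : 1 <= INR (S k).
Proof. rewrite S_INR; pose proof (pos_INR k); lra. Qed.

Lemma ln_le_sub1 (x : R) : 0 < x -> ln x <= x - 1.
Proof. intro Hx; pose proof (exp_ineq1_le (ln x)); rewrite exp_ln in *; lra. Qed.

Lemma ln_nonpos (x : R) : 0 < x <= 1 -> ln x <= 0.
Proof. intros [Hx Hx1]; rewrite <- ln_1; apply ln_le; lra. Qed.

Lemma exp_nonpos_le_1 (x : R) : x <= 0 -> exp x <= 1.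
Proof.
  intro Hx; rewrite <- exp_0; destruct (Rle_lt_or_eq_dec x 0 Hx) as [Hlt| ->];
    [left; apply exp_increasing, Hlt|lra].
Qed.

Lemma harmonic_le_1_ln (n : nat) :
  sum_f_R0 (fun k => / INR (S k)) n <= 1 + ln (INR (S n)).
Proof.
  induction n as [|n IH]; [simpl; rewrite ln_1; lra|].
  rewrite tech5.
  pose proof (INR_S_pos n); pose proof (INR_S_pos (S n)).
  assert (Hstep := ln_le_sub1 (INR (S n) / INR (S (S n)))
                     ltac:(apply Rdiv_lt_0_compat; lra)).
  rewrite ln_div in Hstep by lra.
  enough (INR (S n) / INR (S (S n)) - 1 = - / INR (S (S n))) by lra.
  rewrite (S_INR (S n)); field; lra.
Qed.

Lemma ln_le_harmonic (n : nat) :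
  ln (INR (S (S n))) <= sum_f_R0 (fun k => / INR (S k)) n.
Proof.
  induction n as [|n IH].
  { simpl; rewrite Rinv_1; pose proof (ln_le_sub1 2 ltac:(lra)).
    replace (1 + 1) with 2 by lra; lra. }
  rewrite tech5.
  pose proof (INR_S_pos (S n)); pose proof (INR_S_pos (S (S n))).
  assert (Hstep := ln_le_sub1 (INR (S (S (S n))) / INR (S (S n)))
                     ltac:(apply Rdiv_lt_0_compat; lra)).
  rewrite ln_div in Hstep by lra.
  enough (INR (S (S (S n))) / INR (S (S n)) - 1 = / INR (S (S n))) by lra.
  rewrite (S_INR (S (S n))); field; lra.
Qed.

Lemma Un_cv_le_const (u : nat -> R) (l c : R) :
  Un_cv u l -> (forall n, u n <= c) -> l <= c.
Proof.
  intros Hu Hle; apply (Rle_cv_lim Hle Hu).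
  intros eps Heps; exists 0%nat; intros; unfold Rdist; rewrite Rminus_eq_0, Rabs_R0; lra.
Qed.

Lemma Un_cv_ge_const (u : nat -> R) (l c : R) :
  Un_cv u l -> (forall n, c <= u n) -> c <= l.
Proof.
  intros Hu Hle; refine (Rle_cv_lim Hle _ Hu).
  intros eps Heps; exists 0%nat; intros; unfold Rdist; rewrite Rminus_eq_0, Rabs_R0; lra.
Qed.

Lemma sum_f_R0_opp (a : nat -> R) (n : nat) :
  sum_f_R0 (fun k => - a k) n = - sum_f_R0 a n.
Proof. induction n as [|n IH]; simpl; [|rewrite IH]; ring. Qed.

Lemma sum_f_R0_le_add (a : nat -> R) (m p : nat) : (forall k, 0 <= a k) ->
  sum_f_R0 a m <= sum_f_R0 a (m + p).
Proof.
  intro Ha; induction p as [|p IH]; [rewrite Nat.add_0_r; lra|].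
  rewrite Nat.add_succ_r; simpl; specialize (Ha (S (m + p))); lra.
Qed.

Lemma sum_f_R0_le_first (a : nat -> R) (m : nat) : (forall k, a k <= 0) ->
  sum_f_R0 a m <= a 0%nat.
Proof.
  intro Ha; induction m as [|m IH]; simpl; [lra|]; specialize (Ha (S m)); lra.
Qed.

Lemma nonincreasing_of_deriv_nonpos (f f' : R -> R) (a b : R) : a <= b ->
  (forall x, a <= x <= b -> derivable_pt_lim f x (f' x)) ->
  (forall x, a <= x <= b -> f' x <= 0) -> f b <= f a.
Proof.
  intros Hab Hd Hsign.
  destruct (Req_dec a b) as [->|Hne]; [lra|].
  destruct (MVT_cor3 f f' a b ltac:(lra) ltac:(auto)) as [c [Hac [Hcb ->]]].
  assert (f' c <= 0) by auto; nra.
Qed.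

Lemma nondecreasing_of_deriv_nonneg (f f' : R -> R) (a b : R) : a <= b ->
  (forall x, a <= x <= b -> derivable_pt_lim f x (f' x)) ->
  (forall x, a <= x <= b -> 0 <= f' x) -> f a <= f b.
Proof.
  intros Hab Hd Hsign.
  enough (- f b <= - f a) by lra.
  apply (nonincreasing_of_deriv_nonpos (fun x => - f x) (fun x => - f' x) a b Hab).
  - intros x Hx; apply (derivable_pt_lim_opp f), Hd, Hx.
  - intros x Hx; specialize (Hsign x Hx); lra.
Qed.

Lemma right_continuous_at_witness (f : R -> R) (a t eps : R) :
  (forall eps, 0 < eps -> exists delta, 0 < delta /\
     forall s, 0 <= s < delta -> Rabs (f s - a) < eps) ->
  0 < t -> 0 < eps -> exists s, 0 < s < t /\ Rabs (f s - a) < eps.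
Proof.
  intros Hrc Ht Heps.
  destruct (Hrc eps Heps) as [delta [Hdelta Hs]].
  exists (Rmin delta t / 2).
  pose proof (Rmin_l delta t); pose proof (Rmin_r delta t).
  assert (0 < Rmin delta t) by (apply Rmin_glb_lt; lra).
  split; [lra|apply Hs; lra].
Qed.

Definition R1_term (u : R) : nat -> R := mu_terms (fun xi => exp (u * xi) - 1).

Lemma R1_term_nonpos (u : R) (k : nat) : u <= 0 -> R1_term u k <= 0.
Proof.
  intro Hu; unfold R1_term, mu_terms.
  pose proof (INR_S_pos k); set (x := INR (S k)) in *.
  assert (exp (u * x) <= 1) by (apply exp_nonpos_le_1; nra).
  assert (0 < / x ^ 2) by (apply Rinv_0_lt_compat, pow_lt; lra).
  unfold Rdiv; nra.
Qed.

Lemma R1_term_ge_inv_sq (u : R) (k : nat) : - / INR (S k) ^ 2 <= R1_term u k.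
Proof.
  unfold R1_term, mu_terms.
  pose proof (INR_S_pos k); set (x := INR (S k)) in *.
  pose proof (exp_pos (u * x)).
  assert (0 < / x ^ 2) by (apply Rinv_0_lt_compat, pow_lt; lra).
  unfold Rdiv; nra.
Qed.

Lemma R1_term_ge_linear (v : R) (k : nat) : - (v / INR (S k)) <= R1_term (- v) k.
Proof.
  unfold R1_term, mu_terms.
  pose proof (INR_S_pos k); set (x := INR (S k)) in *.
  pose proof (exp_ineq1_le (- v * x)).
  assert (Hx2 : 0 < x ^ 2) by (apply pow_lt; lra).
  apply (Rmult_le_reg_r (x ^ 2) _ _ Hx2).
  unfold Rdiv; rewrite Rmult_assoc, Rinv_l by lra.
  replace (- (v * / x) * x ^ 2) with (- v * x) by (field; lra); lra.
Qed.

Lemma R1_term_first_neg (u : R) : u < 0 -> R1_term u 0 < 0.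
Proof.
  intro Hu; unfold R1_term, mu_terms; simpl.
  assert (exp (u * 1) < 1) by (rewrite Rmult_1_r, <- exp_0; apply exp_increasing; lra).
  rewrite !Rmult_1_r in *; unfold Rdiv; rewrite Rinv_1; lra.
Qed.

(* Beyond the cut-off [n], use [1/(k+1)^2 <= 1/(k(k+1))], which telescopes. *)
Definition R1_term_majorant (v : R) (n k : nat) : R :=
  if (k <=? n)%nat then v / INR (S k) else / (INR k * INR (S k)).

Lemma R1_term_majorant_nonneg (v : R) (n k : nat) : 0 <= v -> 0 <= R1_term_majorant v n k.
Proof.
  intro Hv; unfold R1_term_majorant; pose proof (INR_S_pos k).
  destruct (Nat.leb_spec k n) as [Hk|Hk].
  - unfold Rdiv; apply Rmult_le_pos; [lra|left; apply Rinv_0_lt_compat; lra].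
  - assert (0 < INR k) by (apply lt_0_INR; lia).
    left; apply Rinv_0_lt_compat; nra.
Qed.

Lemma R1_term_ge_neg_majorant (v : R) (n k : nat) :
  - R1_term_majorant v n k <= R1_term (- v) k.
Proof.
  unfold R1_term_majorant; destruct (Nat.leb_spec k n) as [Hk|Hk].
  - apply R1_term_ge_linear.
  - eapply Rle_trans; [|apply R1_term_ge_inv_sq].
    assert (0 < INR k) by (apply lt_0_INR; lia).
    rewrite (S_INR k); apply Ropp_le_contravar, Rinv_le_contravar; nra.
Qed.

Lemma R1_term_majorant_partial_sum (v : R) (n j : nat) :
  sum_f_R0 (R1_term_majorant v n) (n + j) =
  v * sum_f_R0 (fun k => / INR (S k)) n + / INR (S n) - / INR (S (n + j)).
Proof.
  induction j as [|j IH].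
  - rewrite Nat.add_0_r.
    enough (sum_f_R0 (R1_term_majorant v n) n = v * sum_f_R0 (fun k => / INR (S k)) n) by lra.
    rewrite scal_sum; apply sum_eq; intros k Hk.
    unfold R1_term_majorant; destruct (Nat.leb_spec k n); [|lia].
    unfold Rdiv; ring.
  - rewrite Nat.add_succ_r, tech5, IH.
    unfold R1_term_majorant; destruct (Nat.leb_spec (S (n + j)) n); [lia|].
    pose proof (INR_S_pos n); pose proof (INR_S_pos (n + j)).
    rewrite (S_INR (S (n + j))); field; lra.
Qed.

Definition osgood (v : R) : R := v * (3 - ln v).

Definition osgood_primitive (u : R) : R := - ln (3 - ln (- u)).

Lemma osgood_pos (v : R) : 0 < v <= 1 -> 0 < osgood v.
Proof. intro Hv; pose proof (ln_nonpos v Hv); unfold osgood; nra. Qed.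

Lemma osgood_primitive_deriv (u : R) : -1 <= u < 0 ->
  is_derive osgood_primitive u (- / osgood (- u)).
Proof.
  intro Hu; pose proof (ln_nonpos (- u) ltac:(lra)).
  unfold osgood_primitive, osgood; auto_derive; [repeat split; lra|field; lra].
Qed.

Lemma osgood_primitive_to_neg_infty (M : R) :
  exists delta, 0 < delta /\ forall e, 0 < e < delta -> osgood_primitive (- e) < M.
Proof.
  exists (exp (3 - exp (- M))); split; [apply exp_pos|]; intros e He.
  unfold osgood_primitive; rewrite Ropp_involutive.
  assert (ln e < 3 - exp (- M))
    by (rewrite <- (ln_exp (3 - exp (- M))); apply ln_increasing; lra).
  pose proof (exp_pos (- M)).
  assert (- M < ln (3 - ln e)) by (rewrite <- (ln_exp (- M)); apply ln_increasing; lra).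
  lra.
Qed.

Lemma inv_osgood_continuous (u : R) : -1 <= u < 0 ->
  continuous (fun w => - / osgood (- w)) u.
Proof.
  intro Hu; pose proof (ln_nonpos (- u) ltac:(lra)).
  apply (ex_derive_continuous (K := R_AbsRing) (V := R_NormedModule)).
  unfold osgood; auto_derive; repeat split; try lra.
  apply Rmult_integral_contrapositive; lra.
Qed.

Section R1_bounds.

Variables (beta1 : R) (R1 : R -> R).
Hypothesis h_integral : mu_integral h beta1.
Hypothesis R1_def : is_R1 beta1 R1.

Lemma R1_series (u : R) : u <= 0 -> infinite_sum (R1_term u) (R1 u).
Proof.
  intro Hu.
  pose proof (R1_def u Hu) as Hcomp; unfold mu_integral in *.
  apply is_series_Reals in Hcomp; pose proof (proj2 (is_series_Reals _ _) h_integral) as Hh.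
  apply is_series_Reals.
  replace (R1 u) with (plus (R1 u - (/ 2 * alpha1 * u ^ 2 + beta1 * u - gamma1)) (scal u beta1))
    by (unfold plus, scal, alpha1, gamma1; simpl; unfold mult; simpl; ring).
  eapply is_series_ext; [|exact (is_series_plus _ _ _ _ Hcomp (is_series_scal u _ _ Hh))].
  intro k; unfold R1_term, mu_terms.
  pose proof (INR_S_pos k); set (x := INR (S k)) in *.
  unfold plus, scal; simpl; unfold mult; simpl; field; lra.
Qed.

Lemma R1_le_first_term (u : R) : u <= 0 -> R1 u <= R1_term u 0.
Proof.
  intro Hu; apply (Un_cv_le_const _ _ _ (R1_series u Hu)).
  intro m; apply sum_f_R0_le_first; intro k; apply R1_term_nonpos, Hu.
Qed.

Lemma R1_nonpos (u : R) : u <= 0 -> R1 u <= 0.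
Proof. intro Hu; pose proof (R1_le_first_term u Hu); pose proof (R1_term_nonpos u 0 Hu); lra. Qed.

Lemma R1_neg (u : R) : u < 0 -> R1 u < 0.
Proof.
  intro Hu; pose proof (R1_le_first_term u ltac:(lra)); pose proof (R1_term_first_neg u Hu); lra.
Qed.

Lemma neg_R1_le_harmonic (v : R) (n : nat) : 0 <= v ->
  - R1 (- v) <= v * sum_f_R0 (fun k => / INR (S k)) n + / INR (S n).
Proof.
  intro Hv.
  enough (- (v * sum_f_R0 (fun k => / INR (S k)) n + / INR (S n)) <= R1 (- v)) by lra.
  apply (Un_cv_ge_const _ _ _ (R1_series (- v) ltac:(lra))); intro m.
  assert (Hterms : - sum_f_R0 (R1_term_majorant v n) m <= sum_f_R0 (R1_term (- v)) m).
  { rewrite <- sum_f_R0_opp; apply sum_Rle; intros; apply R1_term_ge_neg_majorant. }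
  pose proof (sum_f_R0_le_add _ m n (fun k => R1_term_majorant_nonneg v n k Hv)) as Hmono.
  rewrite Nat.add_comm, R1_term_majorant_partial_sum in Hmono.
  pose proof (INR_S_pos (n + m)).
  assert (0 < / INR (S (n + m))) by (apply Rinv_0_lt_compat; lra).
  lra.
Qed.

(* Cut the series at [n + 1 = floor (1/v)]. *)
Lemma neg_R1_le_osgood (v : R) : 0 < v <= 1 -> - R1 (- v) <= osgood v.
Proof.
  intro Hv; unfold osgood.
  assert (Hinv : 1 <= / v) by (rewrite <- Rinv_1; apply Rinv_le_contravar; lra).
  destruct (nfloor_ex (/ v) ltac:(lra)) as [[|n] [Hfl Hfl']]; [simpl in Hfl'; lra|].
  pose proof (neg_R1_le_harmonic v n ltac:(lra)).
  pose proof (harmonic_le_1_ln n).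
  assert (Hln : ln (INR (S n)) <= - ln v)
    by (rewrite <- ln_Rinv by lra; apply ln_le; [apply INR_S_pos|exact Hfl]).
  assert (Htail : / INR (S n) <= 2 * v).
  { pose proof (INR_S_ge1 n).
    assert (1 < v * (INR (S n) + 1)).
    { apply (Rmult_lt_compat_l v) in Hfl'; [|lra]. rewrite Rinv_r in Hfl'; lra. }
    apply (Rmult_le_reg_r (INR (S n))); [lra|]. rewrite Rinv_l by lra. nra. }
  nra.
Qed.

Hypothesis inv_sq_sum : infinite_sum (fun k => / INR (S k) ^ 2) beta1.

(* Weierstrass M-test for the series of [u |-> R1_term (- |u|) k], dominated by [1/(k+1)^2];
   its sum is [R1 (- |u|)], which coincides with [R1] on the negative half-line. *)
Lemma R1_continuous (x : R) : x < 0 -> continuity_pt R1 x.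
Proof.
  intro Hx.
  set (fn := fun k u => R1_term (- Rabs u) k).
  set (cv := fun u => exist (fun l => Un_cv (fun N => SP fn N u) l) (R1 (- Rabs u))
                         (R1_series (- Rabs u) ltac:(pose proof (Rabs_pos u); lra))).
  assert (Hcvn : CVN_R fn).
  { intro r; exists (fun k => / INR (S k) ^ 2), beta1; split.
    - intros eps Heps; destruct (inv_sq_sum eps Heps) as [N HN]; exists N; intros n Hn.
      rewrite (sum_eq _ (fun k => / INR (S k) ^ 2)); [apply HN, Hn|].
      intros k _; apply Rabs_pos_eq; left; apply Rinv_0_lt_compat, pow_lt, INR_S_pos.
    - intros k y _; unfold fn.
      rewrite Rabs_left1 by (apply R1_term_nonpos; pose proof (Rabs_pos y); lra).
      pose proof (R1_term_ge_inv_sq (- Rabs y) k); lra. }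
  assert (Hcont : continuity (SFL fn cv))
    by (apply (SFL_continuity fn cv Hcvn); intro k; unfold fn, R1_term, mu_terms; reg).
  apply continuity_pt_filterlim, (continuous_ext_loc _ (SFL fn cv)).
  - apply (filter_imp (fun u => u < 0)); [|exact (open_lt 0 x Hx)].
    intros u Hu; unfold SFL, cv; simpl; rewrite Rabs_left, Ropp_involutive; lra.
  - apply continuity_pt_filterlim, Hcont.
Qed.

Lemma improper_integral_inv_R1 : improper_integral_left_neg_infty (fun u => / R1 u) (-1) 0.
Proof.
  split.
  - intros e He; constructor; apply continuity_implies_RiemannInt; [lra|].
    intros x Hx; apply continuity_pt_inv; [apply R1_continuous; lra|].
    pose proof (R1_neg x ltac:(lra)); lra.
  - intro M; destruct (osgood_primitive_to_neg_infty (- M - ln 3)) as [delta [Hdelta Hsmall]].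
    exists delta; split; [exact Hdelta|].
    intros e He He1 pr; rewrite <- (RInt_Reals _ _ _ pr).
    assert (Hprim : is_RInt (fun w => - / osgood (- w)) (-1) (0 - e)
                      (minus (osgood_primitive (0 - e)) (osgood_primitive (-1)))).
    { apply (is_RInt_derive (V := R_CompleteNormedModule));
        intros x Hx; rewrite Rmin_left, Rmax_right in Hx by lra.
      - apply osgood_primitive_deriv; lra.
      - apply inv_osgood_continuous; lra. }
    assert (Hle : RInt (fun u => / R1 u) (-1) (0 - e) <=
                  minus (osgood_primitive (0 - e)) (osgood_primitive (-1))).
    { rewrite <- (is_RInt_unique _ _ _ _ Hprim).
      apply RInt_le; [lra|apply ex_RInt_Reals_1, pr|eexists; exact Hprim|].
      intros x Hx.
      pose proof (R1_neg x ltac:(lra)); pose proof (neg_R1_le_osgood (- x) ltac:(lra)).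
      rewrite Ropp_involutive in *; pose proof (osgood_pos (- x) ltac:(lra)).
      replace (/ R1 x) with (- / (- R1 x)) by (field; lra).
      apply Ropp_le_contravar, Rinv_le_contravar; lra. }
    assert (Hstart : osgood_primitive (-1) = - ln 3).
    { unfold osgood_primitive; replace (- -1) with 1 by ring.
      rewrite ln_1, Rminus_0_r; reflexivity. }
    specialize (Hsmall e He); rewrite Rminus_0_l in Hle |- *.
    unfold minus, plus, opp in Hle; simpl in Hle. lra.
Qed.

End R1_bounds.

Section osgood_uniqueness.

Variables (R1 p : R -> R).
Hypothesis R1_le0 : forall u, u <= 0 -> R1 u <= 0.
Hypothesis R1_osgood_bound : forall v, 0 < v <= 1 -> - R1 (- v) <= osgood v.
Hypothesis p_at_0 : p 0 = 0.
Hypothesis p_le0 : forall t, 0 <= t -> p t <= 0.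
Hypothesis p_deriv : forall t, 0 < t -> derivable_pt_lim p t (R1 (p t)).
Hypothesis p_right_cont : forall eps, 0 < eps -> exists delta, 0 < delta /\
  forall s, 0 <= s < delta -> Rabs (p s - 0) < eps.

Lemma p_nonincreasing (a b : R) : 0 < a <= b -> p b <= p a.
Proof.
  intro Hab; apply (nonincreasing_of_deriv_nonpos p (fun t => R1 (p t))); [lra| |].
  - intros x Hx; apply p_deriv; lra.
  - intros x Hx; apply R1_le0, p_le0; lra.
Qed.

Lemma p_attains (t y : R) : 0 < t -> p t < y < 0 -> exists s, 0 < s <= t /\ p s = y.
Proof.
  intros Ht Hy.
  destruct (right_continuous_at_witness p 0 t (- y) p_right_cont Ht ltac:(lra))
    as [e [He Hpe]].
  rewrite Rminus_0_r in Hpe; apply Rabs_def2 in Hpe.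
  destruct (Ranalysis5.IVT_interv (fun r => y - p r) e t) as [s [Hs Hps]]; try lra.
  - intros r Hr; apply continuity_pt_minus; [apply continuity_pt_const; intros ? ?; reflexivity|].
    apply (derivable_continuous_pt p r (exist _ _ (p_deriv r ltac:(lra)))).
  - exists s; split; lra.
Qed.

Lemma osgood_potential_nondecreasing (s t : R) : 0 < s <= t -> -1 <= p t -> p s < 0 ->
  s - osgood_primitive (p s) <= t - osgood_primitive (p t).
Proof.
  intros Hst Hpt Hps.
  assert (Hrange : forall x, s <= x <= t -> -1 <= p x < 0).
  { intros x Hx; pose proof (p_nonincreasing s x ltac:(lra));
      pose proof (p_nonincreasing x t ltac:(lra)); lra. }
  apply (nondecreasing_of_deriv_nonneg (fun r => r - osgood_primitive (p r))
           (fun r => 1 + R1 (p r) / osgood (- p r))); [lra| |].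
  - intros x Hx; apply is_derive_Reals.
    replace (1 + R1 (p x) / osgood (- p x))
      with (minus one (scal (R1 (p x)) (- / osgood (- p x))))
      by (unfold minus, plus, opp, scal, one; simpl; unfold mult; simpl; unfold Rdiv; ring).
    exact (is_derive_minus _ _ _ _ _ (is_derive_id x)
             (is_derive_comp osgood_primitive p x _ _
                (osgood_primitive_deriv _ (Hrange x Hx))
                (proj2 (is_derive_Reals _ _ _) (p_deriv x ltac:(lra))))).
  - intros x Hx; specialize (Hrange x Hx).
    pose proof (R1_osgood_bound (- p x) ltac:(lra)); rewrite Ropp_involutive in *.
    pose proof (osgood_pos (- p x) ltac:(lra)).
    enough (- R1 (p x) / osgood (- p x) <= 1) by (unfold Rdiv in *; lra).
    apply (Rmult_le_reg_r (osgood (- p x))); [lra|].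
    unfold Rdiv; rewrite Rmult_assoc, Rinv_l by lra; lra.
Qed.

(* If [p t < 0], then [p] takes values arbitrarily close to [0-] at earlier times, where the
   nondecreasing potential [s - osgood_primitive (p s)] would be arbitrarily large. *)
Lemma p_identically_zero (t : R) : 0 <= t -> p t = 0.
Proof.
  intro Ht; destruct (Rle_lt_or_eq_dec _ _ (p_le0 t Ht)) as [Hneg|]; [exfalso|assumption].
  assert (Ht0 : 0 < t) by (destruct Ht as [|<-]; [assumption|lra]).
  set (y := Rmax (p t) (-1) / 2).
  assert (Hy : p t < y < 0 /\ -1 <= y).
  { unfold y; pose proof (Rmax_l (p t) (-1)); pose proof (Rmax_r (p t) (-1)).
    destruct (Rle_dec (p t) (-1)); [rewrite Rmax_right|rewrite Rmax_left]; lra. }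
  destruct (p_attains t y Ht0 (proj1 Hy)) as [t2 [Ht2 Hpt2]].
  destruct (osgood_primitive_to_neg_infty (- (t2 - osgood_primitive y)))
    as [delta [Hdelta Hsmall]].
  set (e := Rmin (delta / 2) (- y / 2)).
  assert (He : 0 < e < delta /\ e < - y).
  { unfold e; pose proof (Rmin_l (delta / 2) (- y / 2)); pose proof (Rmin_r (delta / 2) (- y / 2)).
    assert (0 < Rmin (delta / 2) (- y / 2)) by (apply Rmin_glb_lt; lra); lra. }
  destruct (p_attains t2 (- e) (proj1 Ht2) ltac:(lra)) as [s [Hs Hps]].
  pose proof (osgood_potential_nondecreasing s t2 Hs ltac:(lra) ltac:(lra)).
  specialize (Hsmall e (proj1 He)); rewrite Hps, Hpt2 in *; lra.
Qed.

End osgood_uniqueness.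

Lemma zero_of_deriv_zero (q : R -> R) : q 0 = 0 ->
  (forall t, 0 < t -> derivable_pt_lim q t 0) ->
  (forall eps, 0 < eps -> exists delta, 0 < delta /\
     forall s, 0 <= s < delta -> Rabs (q s - 0) < eps) ->
  forall t, 0 <= t -> q t = 0.
Proof.
  intros Hq0 Hd Hrc t [Ht| <-]; [|exact Hq0].
  destruct (Req_dec (q t) 0) as [|Hne]; [assumption|exfalso].
  destruct (right_continuous_at_witness q 0 t (Rabs (q t)) Hrc Ht (Rabs_pos_lt _ Hne))
    as [s [Hs Hqs]].
  assert (Hconst : q s = q t).
  { apply Rle_antisym;
      [apply (nondecreasing_of_deriv_nonneg q (fun _ => 0))|
       apply (nonincreasing_of_deriv_nonpos q (fun _ => 0))];
      try lra; intros x Hx; try lra; apply Hd; lra. }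
  rewrite Rminus_0_r, Hconst in Hqs; lra.
Qed.

Lemma total_mass_one (beta1 : R) (R1 : R -> R) :
  mu_integral h beta1 -> is_R1 beta1 R1 ->
  forall psi0 psi, riccati_solution R1 psi0 psi ->
  forall t x, 0 <= t -> 0 <= x -> total_mass psi0 psi t x = 1.
Proof.
  intros Hh HR psi0 psi Hric t x Ht Hx.
  destruct (Hric 0 (Rle_refl 0)) as [Hpsi_0 [Hpsi0_0 [Hpsi_le0 [Hpsi_d [Hpsi0_d Hrc]]]]].
  assert (Hpsi : psi t 0 = 0).
  { apply (p_identically_zero R1 (fun s => psi s 0)); trivial.
    - exact (R1_nonpos beta1 R1 Hh HR).
    - exact (neg_R1_le_osgood beta1 R1 Hh HR).
    - intros eps Heps; destruct (Hrc eps Heps) as [delta [Hdelta Hs]].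
      exists delta; split; [exact Hdelta|intros s Hs'; apply (Hs s Hs')]. }
  assert (Hpsi0 : psi0 t 0 = 0).
  { apply (zero_of_deriv_zero (fun s => psi0 s 0)); trivial.
    - intros s Hs; pose proof (Hpsi0_d s Hs) as D.
      unfold Rfun0, alpha0, beta0, gamma0 in D.
      replace (/ 2 * 0 * _ + 0 * _ - 0 + 0) with 0 in D by ring.
      exact D.
    - intros eps Heps; destruct (Hrc eps Heps) as [delta [Hdelta Hs]].
      exists delta; split; [exact Hdelta|intros s Hs'; rewrite Rminus_0_r; apply (Hs s Hs')]. }
  unfold total_mass; rewrite Hpsi, Hpsi0, Rmult_0_l, Rplus_0_r; apply exp_0.
Qed.

Lemma h_at_positive_integer (k : nat) : h (INR (S k)) = 1.
Proof.
  unfold h; pose proof (INR_S_ge1 k).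
  rewrite Rabs_pos_eq, Rmin_left by lra; field; lra.
Qed.

Lemma mu_integral_h_sq (beta1 : R) :
  infinite_sum (fun k => / INR (S k) ^ 2) beta1 ->
  mu_integral (fun xi => Rabs (h xi) ^ 2) beta1.
Proof.
  intros Hb eps Heps; destruct (Hb eps Heps) as [N HN]; exists N; intros n Hn.
  rewrite (sum_eq _ (fun k => / INR (S k) ^ 2)); [apply HN, Hn|].
  intros k _; unfold mu_terms; rewrite h_at_positive_integer, Rabs_R1, pow1.
  unfold Rdiv; apply Rmult_1_l.
Qed.

Lemma mu_integral_infinite_min_abs_sq :
  mu_integral_infinite (fun xi => Rmin (Rabs xi) (Rabs xi ^ 2)).
Proof.
  intro M; destruct (nfloor_ex (exp M) (Rlt_le _ _ (exp_pos M))) as [N [_ HN]].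
  exists N; intros n Hn.
  rewrite (sum_eq _ (fun k => / INR (S k))).
  - eapply Rlt_le_trans; [|apply ln_le_harmonic].
    rewrite <- (ln_exp M) at 1; apply ln_increasing; [apply exp_pos|].
    assert (INR N <= INR n) by (apply le_INR; lia).
    rewrite !S_INR; lra.
  - intros k _; unfold mu_terms; pose proof (INR_S_ge1 k).
    rewrite Rabs_pos_eq, Rmin_left by nra; field; lra.
Qed.

Theorem mainTheorem3 :
  forall (beta1 : R),
    infinite_sum (fun k => / (INR (S k)) ^ 2) beta1 ->
    mu_integral h beta1 ->
  forall (Rfun1 : R -> R), is_R1 beta1 Rfun1 ->
  (0 <= alpha0 /\ 0 <= alpha1 /\ beta0 - 0 >= 0 /\ 0 <= gamma0 /\ 0 <= gamma1 /\
   exists l, mu_integral (fun xi => (Rabs (h xi)) ^ 2) l) /\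
  mu_integral_infinite (fun xi => Rmin (Rabs xi) (Rabs xi ^ 2)) /\
  (forall u, Rfun0 u = 0) /\
  (forall u, u <= 0 -> mu_integral (fun xi => exp (u * xi) - 1) (Rfun1 u)) /\
  improper_integral_left_neg_infty (fun u => / Rfun1 u) (-1) 0 /\
  (forall psi0 psi : R -> R -> R, riccati_solution Rfun1 psi0 psi ->
     forall t x, 0 <= t -> 0 <= x -> total_mass psi0 psi t x = 1).
Proof.
  intros beta1 Hb Hh R1 HR.
  split; [|split; [|split; [|split; [|split]]]].
  - unfold alpha0, alpha1, beta0, gamma0, gamma1; repeat split; try lra.
    exists beta1; exact (mu_integral_h_sq beta1 Hb).
  - exact mu_integral_infinite_min_abs_sq.
  - intro u; unfold Rfun0, alpha0, beta0, gamma0; ring.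
  - exact (R1_series beta1 R1 Hh HR).
  - exact (improper_integral_inv_R1 beta1 R1 Hh HR Hb).
  - exact (total_mass_one beta1 R1 Hh HR).
Qed.
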